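(* Let $\{\mathbf{x}_k\}_{k=0}^{K}$ be the sequence generated by the CG-BiO algorithm. Then for any $k\geq 0$, $f(\mathbf{x}_{k+1})\leq f(\mathbf{x}_k)-\gamma_k \mathcal{G}(\mathbf{x}_k) +\frac{1}{2}\gamma_k^2L_f D^2$ and $g(\mathbf{x}_{k+1})\leq (1-\gamma_k) g(\mathbf{x}_k)+\gamma_k g(\mathbf{x}_0) +\frac{1}{2}\gamma_k^2 L_g D^2$.
   Context: Consider the simple bilevel problem $\min_{\mathbf{x}\in\mathbb{R}^d} f(\mathbf{x})$ s.t. $\mathbf{x}\in \operatorname*{arg\,min}_{\mathbf{z}\in\mathcal{Z}} g(\mathbf{z})$. Assume: $\mathcal{Z}\subset\mathbb{R}^d$ is convex and compact with diameter $D$ in a norm $\|\cdot\|$ (dual norm $\|\cdot\|_*$); $g$ is convex and continuously differentiable on an open set containing $\mathcal{Z}$ with $L_g$-Lipschitz gradient on $\mathcal{Z}$; $f$ is continuously differentiable with $L_f$-Lipschitz gradient. Let $g^*=\min_{\mathbf{z}\in\mathcal{Z}}g(\mathbf{z})$ and $\mathcal{X}_g^*=\operatorname*{arg\,min}_{\mathbf{z}\in\mathcal{Z}}g(\mathbf{z})$. The CG-BiO algorithm: choose $\mathbf{x}_0\in\mathcal{Z}$ with $g(\mathbf{x}_0)-g^*\le \epsilon_g/2$; at iteration $k$, let $\mathcal{X}_k=\{\mathbf{s}\in\mathcal{Z}: \langle\nabla g(\mathbf{x}_k),\mathbf{s}-\mathbf{x}_k\rangle\le g(\mathbf{x}_0)-g(\mathbf{x}_k)\}$,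 compute $\mathbf{s}_k\in\operatorname*{arg\,min}_{\mathbf{s}\in\mathcal{X}_k}\langle\nabla f(\mathbf{x}_k),\mathbf{s}\rangle$ and set $\mathbf{x}_{k+1}=(1-\gamma_k)\mathbf{x}_k+\gamma_k\mathbf{s}_k$ with stepsize $\gamma_k\in[0,1]$. The Frank–Wolfe gap is $\mathcal{G}(\mathbf{x})=\max_{\mathbf{s}\in\mathcal{X}_g^*}\langle\nabla f(\mathbf{x}),\mathbf{x}-\mathbf{s}\rangle$. *)

From HB Require Import structures.
From mathcomp Require Import all_boot all_order all_algebra.
From mathcomp Require Import all_classical all_reals all_analysis.
Set Implicit Arguments. Unset Strict Implicit. Unset Printing Implicit Defensive.
Import Order.TTheory GRing.Theory Num.Theory.
Import numFieldNormedType.Exports.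
Local Open Scope classical_set_scope.
Local Open Scope ring_scope.

Section Defs.
Variables (R : realType) (d : nat).
Notation V := 'rV[R]_d.

Definition inner (u v : V) : R := \sum_(i < d) u ord0 i * v ord0 i.

Definition is_norm (N : V -> R) : Prop :=
  [/\ forall x, N x = 0 -> x = 0,
      forall (a : R) x, N (a *: x) = `|a| * N x
    & forall x y, N (x + y) <= N x + N y].

Definition dual_norm (N : V -> R) (y : V) : R :=
  sup [set inner y x | x in [set x | N x <= 1]].

Definition diam (N : V -> R) (Z : set V) : R :=
  sup [set r | exists x y, [/\ Z x, Z y & r = N (x - y)]].

Definition convex_fun_on (g : V -> R) (Z : set V) : Prop :=
  forall x y (t : R), Z x -> Z y -> 0 <= t <= 1 ->
    g ((1 - t) *: x + t *: y) <= (1 - t) * g x + t * g y.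

Definition gstar (g : V -> R) (Z : set V) : R := inf (g @` Z).

Definition argmin_set (g : V -> R) (Z : set V) : set V :=
  [set z | Z z /\ g z = gstar g Z].

Definition fw_gap (gradf : V -> V) (Xs : set V) (x : V) : R :=
  sup [set inner (gradf x) (x - s) | s in Xs].

Definition cut_set (g : V -> R) (gradg : V -> V) (Z : set V) (x0 xk : V) : set V :=
  [set s | Z s /\ inner (gradg xk) (s - xk) <= g x0 - g xk].

End Defs.

From HB Require Import structures.
From mathcomp Require Import all_boot all_order all_algebra.
From mathcomp Require Import all_classical all_reals all_analysis.
From mathcomp Require Import lra ring.
Set Implicit Arguments. Unset Strict Implicit. Unset Printing Implicit Defensive.
Import Order.TTheory GRing.Theory Num.Theory.
Import numFieldNormedType.Exports.
Local Open Scope classical_set_scope.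
Local Open Scope ring_scope.

(* Both inequalities are the descent lemma
     F y <= F x + <grad F x, y - x> + L/2 N(y - x)^2,
   proved with the mean value theorem along a segment of Z, applied from x_k
   towards s_k, a segment of length at most D.  For g the cutting plane defining
   X_k bounds the linear term by gamma_k (g x_0 - g x_k).  For f, convexity of g
   puts every minimiser z of g on Z into X_k, since
   g x_k + <grad g x_k, z - x_k> <= g z = g^* <= g x_0, so the minimality of s_k
   gives <grad f x_k, x_k - s_k> >= G(x_k).  Such a minimiser exists because g is
   continuous on the compact set Z. *)

Lemma continuous_within_linear_bound (R : realType) (V : normedModType R)
    (h : V -> R) (A : set V) :
  (forall x, A x -> exists a, forall y, A y -> `|h y - h x| <= a * `|y - x|) ->
  {within A, continuous h}.
Proof.
move=> hb; apply/subspace_continuousP => x /hb[a {}hb].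
apply/cvgrPdist_le => e e0; rewrite near_withinE.
have a1 : 0 < `|a| + 1 by rewrite ltr_wpDl.
apply/nbhs_ballP; exists (e / (`|a| + 1)) => [|y]; first exact: divr_gt0.
rewrite -ball_normE /= ltr_pdivlMr // => xy Ay.
rewrite distrC; apply: (le_trans (hb y Ay)); rewrite distrC.
have := ler_norm a; have := normr_ge0 (x - y); nra.
Qed.

Lemma scale_onem_addE (R : realType) (M : lmodType R) (a b : M) (t : R) :
  (1 - t) *: a + t *: b = a + t *: (b - a).
Proof. by rewrite scalerBl scale1r scalerBr addrA addrAC. Qed.

Lemma convex_set_segment (R : realType) (M : lmodType R) (Z : set M) a b (t : R) :
  convex_set Z -> Z a -> Z b -> 0 <= t <= 1 -> Z (a + t *: (b - a)).
Proof.
move=> cZ Za Zb /andP[t0 t1].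
have := cZ b a (Itv01 t0 t1) (mem_set Zb) (mem_set Za); rewrite inE.
by rewrite -scale_onem_addE addrC.
Qed.

Lemma is_derive_line (R : realType) (V : normedModType R) (F : V -> R) x v t l :
  is_derive (x + t *: v) v F l -> is_derive t 1 (fun s => F (x + s *: v)) l.
Proof.
case=> Fd Fl.
have E : (fun h : R => h^-1 *: (((fun s => F (x + s *: v)) \o shift t) (h *: 1)
                                   - F (x + t *: v)))
       = (fun h : R => h^-1 *: ((F \o shift (x + t *: v)) (h *: v) - F (x + t *: v))).
  apply/funext => h /=; congr (_ *: (F _ - _)).
  by rewrite [h *: 1]mulr1 scalerDl addrCA addrA.
by split; rewrite /derivable /derive E.
Qed.

Lemma is_derive_quadratic (R : realType) (c q t : R) :
  is_derive t 1 (fun s : R => c * s + q * (s * s)) (c + q * (2 * t)).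
Proof.
have -> : (fun s : R => c * s + q * (s * s)) = c \*: id + q \*: (id * id) by [].
by apply: is_derive_eq; rewrite /GRing.scale /=; ring.
Qed.

Section RowVectors.
Variables (R : realType) (d : nat).
Notation V := 'rV[R]_d.

Lemma inner0r (w : V) : inner w 0 = 0.
Proof. by rewrite /inner big1 // => i _; rewrite mxE mulr0. Qed.

Lemma innerBl (a b v : V) : inner (a - b) v = inner a v - inner b v.
Proof. by rewrite /inner -sumrB; apply: eq_bigr => i _; rewrite !mxE mulrBl. Qed.

Lemma innerBr (w a b : V) : inner w (a - b) = inner w a - inner w b.
Proof. by rewrite /inner -sumrB; apply: eq_bigr => i _; rewrite !mxE mulrBr. Qed.

Lemma innerZr (w v : V) (a : R) : inner w (a *: v) = a * inner w v.
Proof. by rewrite /inner mulr_sumr; apply: eq_bigr => i _; rewrite !mxE mulrCA. Qed.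

Lemma normr_coef_le (x : V) i : `|x ord0 i| <= `|x|.
Proof. by rewrite [`|x|]mx_normrE; apply: le_bigmax (ord0, i). Qed.

Lemma normr_inner_le (w v : V) : `|inner w v| <= (\sum_(i < d) `|w ord0 i|) * `|v|.
Proof.
rewrite /inner mulr_suml; apply: (le_trans (ler_norm_sum _ _ _)).
by apply: ler_sum => i _; rewrite normrM ler_wpM2l // normr_coef_le.
Qed.

Lemma fw_gap_le (gradf : V -> V) (Xs : set V) (x s : V) :
  Xs !=set0 -> (forall z, Xs z -> inner (gradf x) s <= inner (gradf x) z) ->
  fw_gap gradf Xs x <= inner (gradf x) (x - s).
Proof.
move=> [z0 Xz0] smin; apply: ge_sup; first by exists (inner (gradf x) (x - z0)), z0.
by move=> _ [z Xz <-]; rewrite !innerBr lerD2l lerN2 smin.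
Qed.

Lemma convex_fun_on_tangent_le (g : V -> R) (Z : set V) y z l :
  convex_fun_on g Z -> Z y -> Z z -> is_derive y (z - y) g l -> g y + l <= g z.
Proof.
move=> gc Zy Zz [gd <-]; rewrite -lerBrDl.
apply: (cvgr_to_le (cvg_dnbhs_at_right gd)); near=> h.
have h0 : 0 < h by near: h; exact: nbhs_right_gt.
have h1 : h < 1 by near: h; exact: nbhs_right_lt.
have := gc y z h Zy Zz.
rewrite scale_onem_addE [y + _]addrC.
by rewrite (ltW h0) (ltW h1) => /(_ isT) gch /=; rewrite ler_pdivrMl //; lra.
Unshelve. all: by end_near.
Qed.

Lemma gstar_eq_min (g : V -> R) (Z : set V) c :
  Z c -> (forall z, Z z -> g c <= g z) -> gstar g Z = g c.
Proof.
move=> Zc cmin; apply/le_anti/andP; split.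
  by apply: ge_inf; [exists (g c) => _ [z Zz <-]; apply: cmin | exists c].
by apply: lb_le_inf; [exists (g c), c | move=> _ [z Zz <-]; apply: cmin].
Qed.

Lemma argmin_set_sub_cut_set (g : V -> R) (gradg : V -> V) (Z : set V) x0 x :
  convex_fun_on g Z -> (forall a u, Z a -> is_derive a u g (inner (gradg a) u)) ->
  Z x -> gstar g Z <= g x0 -> argmin_set g Z `<=` cut_set g gradg Z x0 x.
Proof.
move=> gc gd Zx gx0 z [Zz gz]; split => //.
by have := convex_fun_on_tangent_le gc Zx Zz (gd x (z - x) Zx); lra.
Qed.

End RowVectors.

Section Norm.
Variables (R : realType) (d : nat) (N : 'rV[R]_d -> R).
Hypothesis hN : is_norm N.
Notation V := 'rV[R]_d.

Lemma is_normZ a x : N (a *: x) = `|a| * N x.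
Proof. by case: hN. Qed.

Lemma is_normD x y : N (x + y) <= N x + N y.
Proof. by case: hN. Qed.

Lemma is_norm0 : N 0 = 0.
Proof. by rewrite -(scale0r (0 : V)) is_normZ normr0 mul0r. Qed.

Lemma is_normN x : N (- x) = N x.
Proof. by rewrite -scaleN1r is_normZ normrN normr1 mul1r. Qed.

Lemma is_norm_ge0 x : 0 <= N x.
Proof.
have := is_normD x (- x); rewrite subrr is_norm0 is_normN.
by rewrite -mulr2n pmulrn_lge0.
Qed.

Lemma is_norm_gt0 x : x != 0 -> 0 < N x.
Proof.
move=> x0; rewrite lt_def is_norm_ge0 andbT; apply: contra x0 => /eqP.
by case: hN => N0 _ _ /N0 ->.
Qed.

Lemma is_norm_sum (I : Type) (r : seq I) (F : I -> V) :
  N (\sum_(i <- r) F i) <= \sum_(i <- r) N (F i).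
Proof.
elim: r => [|a r IH]; first by rewrite !big_nil is_norm0.
by rewrite !big_cons; apply: le_trans (is_normD _ _) _; rewrite lerD2l.
Qed.

Definition basis_norm_sum : R := \sum_(i < d) N (delta_mx ord0 i).

Lemma basis_norm_sum_ge0 : 0 <= basis_norm_sum.
Proof. by apply: sumr_ge0 => i _; apply: is_norm_ge0. Qed.

Lemma is_norm_le_mx_norm x : N x <= basis_norm_sum * `|x|.
Proof.
have {1}-> : x = \sum_(i < d) x ord0 i *: delta_mx ord0 i.
  apply/rowP => j; rewrite summxE (bigD1 j) //= big1 ?addr0.
    by rewrite !mxE eqxx mulr1.
  by move=> k kj; rewrite !mxE eqxx eq_sym (negbTE kj) mulr0.
apply: (le_trans (is_norm_sum _ _)); rewrite mulr_suml; apply: ler_sum => i _.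
by rewrite is_normZ mulrC ler_wpM2l ?is_norm_ge0 ?normr_coef_le.
Qed.

Lemma is_norm_dist_le x y : `|N y - N x| <= basis_norm_sum * `|y - x|.
Proof.
have := is_normD (y - x) x; have := is_normD (x - y) y.
rewrite !subrK -opprB is_normN => hx hy.
have := is_norm_le_mx_norm (y - x); rewrite ler_norml => hle; apply/andP; split; lra.
Qed.

Lemma is_norm_continuous : continuous N.
Proof.
apply/continuous_subspace_setT/continuous_within_linear_bound => x _.
by exists basis_norm_sum => y _; apply: is_norm_dist_le.
Qed.

Lemma is_norm_ge_mx_norm : exists2 m, 0 < m & forall x, m * `|x| <= N x.
Proof.
pose S := [set x : V | `|x| = 1].
have [S0|/set0P S0] := eqVneq S set0.
  exists 1 => // x; rewrite mul1r.
  have [->|x0] := eqVneq x 0; first by rewrite normr0 is_norm_ge0.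
  have : S (`|x|^-1 *: x) by rewrite /S /= normfZV.
  by rewrite S0.
have cS : compact S.
  apply: bounded_closed_compact.
    by apply: filterS (nbhs_pinfty_ge (r:=1) _) => // M hM y /= ->.
  have -> : S = (Num.norm : V -> R) @^-1` [set 1] by [].
  by apply: (continuous_closedP _).1; [exact: norm_continuous | exact: closed_eq].
have [c /set_mem Sc cmin] :=
  compact_EVT_min S0 cS (continuous_subspaceT is_norm_continuous).
have c0 : c != 0 by apply: contra_eq_neq Sc => ->; rewrite normr0 eq_sym oner_neq0.
exists (N c); first exact: is_norm_gt0.
move=> x; have [->|x0] := eqVneq x 0; first by rewrite normr0 mulr0 is_norm_ge0.
have := cmin (`|x|^-1 *: x); rewrite inE /S /= normfZV // => /(_ erefl).
rewrite is_normZ normfV normr_id => H.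
by rewrite -ler_pdivlMr ?normr_gt0 // mulrC.
Qed.

Lemma has_sup_dual_norm w : has_sup [set inner w x | x in [set x | N x <= 1]].
Proof.
have [m m0 hm] := is_norm_ge_mx_norm.
split; first by exists (inner w 0), 0 => //=; rewrite is_norm0.
exists ((\sum_(i < d) `|w ord0 i|) / m) => _ [x /= Nx <-].
apply: le_trans (ler_norm _) _; apply: le_trans (normr_inner_le _ _) _.
rewrite ler_pdivlMr // -mulrA -[leRHS]mulr1 ler_wpM2l ?sumr_ge0 // mulrC.
exact: le_trans (hm x) Nx.
Qed.

Lemma inner_le_dual_norm w v : inner w v <= dual_norm N w * N v.
Proof.
have [->|v0] := eqVneq v 0; first by rewrite is_norm0 mulr0 inner0r.
have Nv := is_norm_gt0 v0.
have : inner w ((N v)^-1 *: v) <= dual_norm N w.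
  apply: (sup_upper_bound (has_sup_dual_norm w)); exists ((N v)^-1 *: v) => //=.
  by rewrite is_normZ ger0_norm ?invr_ge0 ?is_norm_ge0 // mulVf // gt_eqF.
by rewrite innerZr ler_pdivrMl // mulrC.
Qed.

Lemma dual_norm_ge0 w : 0 <= dual_norm N w.
Proof.
apply: le_trans (sup_upper_bound (has_sup_dual_norm w) _); last first.
  by exists 0 => //=; rewrite is_norm0.
by rewrite inner0r.
Qed.

Lemma descent_lemma_line (F : V -> R) (G : V -> V) (L : R) x v :
  (forall t, 0 <= t <= 1 -> is_derive (x + t *: v) v F (inner (G (x + t *: v)) v)) ->
  (forall t, 0 <= t <= 1 -> dual_norm N (G (x + t *: v) - G x) <= L * N (t *: v)) ->
  F (x + v) <= F x + inner (G x) v + 2^-1 * L * N v ^+ 2.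
Proof.
move=> Fd GL; set c := inner (G x) v; set q := 2^-1 * L * N v ^+ 2.
(* By the mean value theorem the increment of [psi] over [0, 1] is a slope at
   some [z], and the Lipschitz bound caps it by the slope [2 q z] of the
   quadratic. *)
pose psi (s : R) := F (x + s *: v) - (c * s + q * (s * s)).
pose dpsi (t : R) := inner (G (x + t *: v)) v - (c + q * (2 * t)).
have psid (t : R) : 0 <= t <= 1 -> is_derive t 1 psi (dpsi t).
  move=> t01; apply: is_deriveB; last exact: is_derive_quadratic.
  exact: is_derive_line (Fd t t01).
have psic : {within `[0, 1], continuous psi}.
  apply: derivable_within_continuous => t; rewrite in_itv /= => t01.
  by case: (psid t t01).
have psid' (t : R) : t \in `]0, 1[ -> is_derive t 1 psi (dpsi t).
  by rewrite in_itv /= => /andP[t0 t1]; apply: psid; rewrite !ltW.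
have [z] := MVT_segment ler01 psid' psic.
rewrite in_itv /= => z01; rewrite /psi /dpsi scale1r scale0r addr0 !mulr1 !mulr0.
have slope : inner (G (x + z *: v)) v - c <= L * z * N v ^+ 2.
  rewrite /c -innerBl; apply: le_trans (inner_le_dual_norm _ _) _.
  apply: le_trans (ler_wpM2r (is_norm_ge0 v) (GL z z01)) _.
  by rewrite is_normZ ger0_norm ?(andP z01).1 // expr2 !mulrA.
have qz : q * (2 * z) = L * z * N v ^+ 2 by rewrite /q; field.
move=> E; lra.
Qed.

Lemma descent_lemma (Z : set V) (F : V -> R) (G : V -> V) (L : R) x y :
  convex_set Z ->
  (forall a u, Z a -> is_derive a u F (inner (G a) u)) ->
  (forall a b, Z a -> Z b -> dual_norm N (G a - G b) <= L * N (a - b)) ->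
  Z x -> Z y -> F y <= F x + inner (G x) (y - x) + 2^-1 * L * N (y - x) ^+ 2.
Proof.
move=> cZ Fd GL Zx Zy.
have Zseg t : 0 <= t <= 1 -> Z (x + t *: (y - x)) by apply: convex_set_segment.
rewrite -{1}(subrKC x y); apply: descent_lemma_line => t t01; first exact/Fd/Zseg.
by have := GL _ _ (Zseg t t01) Zx; rewrite addrAC subrr add0r.
Qed.

Lemma le_diam (Z : set V) a b : compact Z -> Z a -> Z b -> N (a - b) <= diam N Z.
Proof.
move=> cZ Za Zb; apply: sup_upper_bound; last by exists a, b.
split; first by exists (N (a - b)), a, b.
have [M [_ hM]] := compact_bounded cZ.
have ZM y : Z y -> `|y| <= M + 1 by move=> Zy; apply: hM Zy; rewrite ltrDl.
exists (basis_norm_sum * (2 * (M + 1))) => _ [u [w [Zu Zw ->]]].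
apply: le_trans (is_norm_le_mx_norm _) _; rewrite ler_wpM2l ?basis_norm_sum_ge0 //.
by apply: le_trans (ler_normB _ _) _; have := ZM u Zu; have := ZM w Zw; lra.
Qed.

Lemma lipschitz_sq_le_diam (Z : set V) (G : V -> V) (L : R) a b :
  compact Z ->
  (forall u w, Z u -> Z w -> dual_norm N (G u - G w) <= L * N (u - w)) ->
  Z a -> Z b -> L * N (a - b) ^+ 2 <= L * diam N Z ^+ 2.
Proof.
(* A negative constant forces [Z] to be a single point, where both sides vanish. *)
move=> cZ GL Za Zb; have [L0|L0] := leP 0 L.
  by rewrite ler_wpM2l // !expr2 ler_pM ?is_norm_ge0 ?le_diam.
have N0 u w : Z u -> Z w -> N (u - w) = 0.
  move=> Zu Zw; apply/le_anti; rewrite is_norm_ge0 andbT.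
  by have := le_trans (dual_norm_ge0 _) (GL u w Zu Zw); rewrite nmulr_rge0.
have D0 : diam N Z = 0.
  apply/le_anti/andP; split; last by rewrite -(N0 a a Za Za) le_diam.
  apply: ge_sup; first by exists (N (a - a)), a, a.
  by move=> _ [u [w [Zu Zw ->]]]; rewrite N0.
by rewrite N0 // D0 !expr2 !mulr0.
Qed.

Lemma descent_step (Z : set V) (F : V -> R) (G : V -> V) (L : R) x s (t : R) :
  compact Z -> convex_set Z ->
  (forall a u, Z a -> is_derive a u F (inner (G a) u)) ->
  (forall a b, Z a -> Z b -> dual_norm N (G a - G b) <= L * N (a - b)) ->
  Z x -> Z s -> 0 <= t <= 1 ->
  F ((1 - t) *: x + t *: s)
    <= F x + t * inner (G x) (s - x) + 2^-1 * t ^+ 2 * L * diam N Z ^+ 2.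
Proof.
move=> cZ cvZ Fd GL Zx Zs t01.
rewrite scale_onem_addE.
have Zy := convex_set_segment cvZ Zx Zs t01.
apply: le_trans (descent_lemma cvZ Fd GL Zx Zy) _.
rewrite [x + _]addrC addrK innerZr is_normZ ger0_norm ?(andP t01).1 //.
have := ler_wpM2l (sqr_ge0 t) (lipschitz_sq_le_diam cZ GL Zs Zx); lra.
Qed.

Lemma convex_lipschitz_grad_continuous (Z : set V) (g : V -> R) (G : V -> V) (L : R) :
  compact Z -> convex_set Z -> convex_fun_on g Z ->
  (forall a u, Z a -> is_derive a u g (inner (G a) u)) ->
  (forall a b, Z a -> Z b -> dual_norm N (G a - G b) <= L * N (a - b)) ->
  {within Z, continuous g}.
Proof.
(* Directional derivatives alone do not give continuity: [g] is squeezed between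
   its tangent and the parabola of the descent lemma. *)
move=> cZ cvZ gc gd GL; apply: continuous_within_linear_bound => t Zt.
set C := basis_norm_sum; set W := \sum_(i < d) `|G t ord0 i|; set D := diam N Z.
exists (W + `|L| * (D * C)) => y Zy.
have low := convex_fun_on_tangent_le gc Zt Zy (gd t (y - t) Zt).
have up := descent_lemma cvZ gd GL Zt Zy.
have := normr_inner_le (G t) (y - t); rewrite -/W ler_norml => /andP[inner_lo inner_hi].
have Nsq : N (y - t) ^+ 2 <= D * (C * `|y - t|).
  by rewrite expr2 ler_pM ?is_norm_ge0 ?le_diam ?is_norm_le_mx_norm.
have LNsq : L * N (y - t) ^+ 2 <= `|L| * (D * (C * `|y - t|)).
  apply: le_trans (ler_wpM2r (sqr_ge0 _) (ler_norm L)) _.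
  by apply: ler_wpM2l.
have := mulr_ge0 (normr_ge0 L) (le_trans (sqr_ge0 _) Nsq).
move=> LDC_ge0; rewrite ler_norml; apply/andP; split; lra.
Qed.

End Norm.

Theorem lemma2 (R : realType) (d : nat)
  (N : 'rV[R]_d -> R) (Z U : set 'rV[R]_d) (D : R)
  (f g : 'rV[R]_d -> R) (gradf gradg : 'rV[R]_d -> 'rV[R]_d) (Lf Lg : R)
  (eps_g : R) (K : nat) (x s : nat -> 'rV[R]_d) (gamma : nat -> R) :
  is_norm N ->
  (* Z convex, compact, with diameter D *)
  convex_set Z -> compact Z -> D = diam N Z ->
  (* g convex, C^1 on an open set U containing Z, L_g-Lipschitz gradient on Z *)
  convex_fun_on g Z ->
  open U -> Z `<=` U ->
  (forall y v, U y -> is_derive y v g (inner (gradg y) v)) ->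
  (forall y, U y -> {for y, continuous gradg}) ->
  (forall y z, Z y -> Z z -> dual_norm N (gradg y - gradg z) <= Lg * N (y - z)) ->
  (* f C^1 with L_f-Lipschitz gradient *)
  (forall y v, is_derive y v f (inner (gradf y) v)) ->
  continuous gradf ->
  (forall y z, dual_norm N (gradf y - gradf z) <= Lf * N (y - z)) ->
  (* CG-BiO iterates *)
  Z (x 0%N) -> g (x 0%N) - gstar g Z <= eps_g / 2 ->
  (forall k, (k < K)%N ->
     [/\ cut_set g gradg Z (x 0%N) (x k) (s k),
         (forall s', cut_set g gradg Z (x 0%N) (x k) s' ->
            inner (gradf (x k)) (s k) <= inner (gradf (x k)) s'),
         0 <= gamma k <= 1
       & x k.+1 = (1 - gamma k) *: x k + gamma k *: s k]) ->
  forall k, (k < K)%N ->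
    f (x k.+1) <= f (x k) - gamma k * fw_gap gradf (argmin_set g Z) (x k)
                  + 2^-1 * gamma k ^+ 2 * Lf * D ^+ 2
    /\ g (x k.+1) <= (1 - gamma k) * g (x k) + gamma k * g (x 0%N)
                  + 2^-1 * gamma k ^+ 2 * Lg * D ^+ 2.
Proof.
move=> hN cvZ cZ -> gc _ ZU gd _ gL fd _ fL Zx0 _ iter k kK.
have gdZ a u : Z a -> is_derive a u g (inner (gradg a) u) by move/ZU; apply: gd.
have Zx j : (j <= K)%N -> Z (x j).
  elim: j => // j IH jK; have [[Zs _] _ g01 ->] := iter j jK.
  by rewrite scale_onem_addE; apply: convex_set_segment => //; apply/IH/ltnW.
have [[Zs cut] smin g01 ->] := iter k kK.
have Zxk := Zx k (ltnW kK).
(* Without a minimiser the gap would be [sup set0 = 0]. *)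
have [c /set_mem Zc cmin] := compact_EVT_min (ex_intro _ _ Zx0) cZ
  (convex_lipschitz_grad_continuous hN cZ cvZ gc gdZ gL).
have gs : gstar g Z = g c by apply: gstar_eq_min => // z Zz; apply/cmin/mem_set.
have sub : argmin_set g Z `<=` cut_set g gradg Z (x 0%N) (x k).
  by apply: argmin_set_sub_cut_set => //; rewrite gs; apply/cmin/mem_set.
have gap : fw_gap gradf (argmin_set g Z) (x k) <= inner (gradf (x k)) (x k - s k).
  by apply: fw_gap_le => [|z /sub/smin //]; exists c; split; rewrite ?gs.
have fstep := descent_step hN cZ cvZ (fun a u _ => fd a u) (fun a b _ _ => fL a b)
  Zxk Zs g01.
have gstep := descent_step hN cZ cvZ gdZ gL Zxk Zs g01.
have := ler_wpM2l (andP g01).1 gap; have := ler_wpM2l (andP g01).1 cut.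
by move: fstep gstep; rewrite !innerBr => *; split; lra.
Qed.
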